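(* Let $P_0=P_0(q)=\sum_{j\ge1}(-1)^{j-1}(2j-1)q^{j(j-1)/2}$ and let $\Theta=q\frac{d}{dq}$. For every $m\ge1$, \[\Theta^m(P_0)=-3P_0P_m,\] where $P_m$ is a polynomial in $A_0,A_1,\dots,A_{m-1}$ with rational coefficients. Moreover $P_1=A_0$ and $P_{m+1}=\Theta(P_m)-3A_0P_m$ for $m\ge1$.
   Context: For $m\ge1$ let $\sigma(m)$ be the sum of positive divisors of $m$, and $A_i=A_i(q)=\sum_{m\ge1}m^i\sigma(m)q^m$ for $i\ge0$ (so $\Theta(A_i)=A_{i+1}$). Everything is regarded as power series in $q$ (equivalently, functions of $0<q<1$). *)

(* Formal power series in q with rational coefficients are
   represented by their coefficient sequences  nat -> rat  (coefficient of q^n). *)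
From mathcomp Require Import all_boot all_order all_algebra.
Set Implicit Arguments. Unset Strict Implicit. Unset Printing Implicit Defensive.
Import Order.TTheory GRing.Theory Num.Theory.
Local Open Scope ring_scope.

Definition series := nat -> rat.

Definition sconst (c : rat) : series := fun n => if n == 0%N then c else 0.
Definition sadd (f g : series) : series := fun n => f n + g n.
Definition sscale (c : rat) (f : series) : series := fun n => c * f n.
Definition smul (f g : series) : series :=
  fun n => \sum_(k < n.+1) f k * g (n - k)%N.
Definition Theta (f : series) : series := fun n => n%:R * f n.

Definition sigma (m : nat) : nat := \sum_(d <- divisors m) d.

Definition A (i : nat) : series :=
  fun n => if n == 0%N then 0 else (n ^ i * sigma n)%:R.

(* P_0 = sum_{j>=1} (-1)^(j-1) (2j-1) q^(j(j-1)/2) ; the exponent j(j-1)/2 = n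
   forces j <= n+1, so the sum below has at most one nonzero term. *)
Definition P0 : series :=
  fun n => \sum_(1 <= j < n.+2 | ((j * j.-1) %/ 2 == n)%N)
             (-1) ^+ j.-1 * (2 * j - 1)%:R.

Inductive polyInA (m : nat) : series -> Prop :=
  | polyInA_const c : polyInA m (sconst c)
  | polyInA_gen i : (i < m)%N -> polyInA m (A i)
  | polyInA_add f g : polyInA m f -> polyInA m g -> polyInA m (sadd f g)
  | polyInA_mul f g : polyInA m f -> polyInA m g -> polyInA m (smul f g).

(* Jacobi's identity says that P0 = prod_(n >= 1) (1 - q^n)^3, so the logarithmic
   derivative of P0 is -3 sum_e e q^e / (1 - q^e) = -3 A_0, i.e. Theta P0 = -3 P0 A_0.
   As Theta is a derivation with Theta A_i = A_(i+1), the formula for Theta^m P0 and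
   the polynomiality of P_m then follow by induction on m.
   Jacobi's identity is proved modulo q^(n+1) from a finite identity: for
   S(w) = prod_(i < 2n+1) (w - q^i), evaluate 2 w S'(w) - (2n+1) S(w) at the root
   w = q^n, once directly and once after expanding S by the q-binomial theorem.
   Pairing the terms k = n - j and k = n + 1 + j of the expansion gives
   sum_(j <= n) (-1)^j (2j+1) q^(j(j+1)/2) [2n+1, n-j]_q = (q;q)_n^2,
   and (q;q)_n [2n+1, n-j]_q = 1 modulo q^(n-j+1). *)

From mathcomp Require Import all_boot all_order all_algebra.
From mathcomp Require Import ring zify.
From Stdlib Require Import FunctionalExtensionality.
Import GRing.Theory Num.Theory.
Local Open Scope ring_scope.

Lemma mulX_derivXn (R : nzSemiRingType) m : 'X * ('X^m)^`() = 'X^m *+ m :> {poly R}.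
Proof. by case: m => [|m]; rewrite derivXn ?mulr0n ?mulr0 // mulrnAr -exprS. Qed.

Section GaussianBinomial.
Variables (R : comNzRingType) (q : R).

Fixpoint qbinom (N k : nat) : R :=
  match N, k with
  | _, 0 => 1
  | 0, _.+1 => 0
  | N.+1, k.+1 => qbinom N k.+1 + q ^+ (N - k) * qbinom N k
  end.

Lemma qbinom0 N : qbinom N 0 = 1. Proof. by case: N. Qed.

Lemma qbinom_small [N k] : (N < k)%N -> qbinom N k = 0.
Proof.
elim: N k => [|N IHN] [|k] //= ltNk.
by rewrite !IHN ?mulr0 ?addr0 // ltnW.
Qed.

Lemma qbinomii N : qbinom N N = 1.
Proof. by elim: N => //= N ->; rewrite qbinom_small // subnn mulr1 add0r. Qed.

Definition qpoch (m : nat) : R := \prod_(i < m) (1 - q ^+ i.+1).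

Lemma qpoch0 : qpoch 0 = 1. Proof. exact: big_ord0. Qed.

Lemma qpochS m : qpoch m.+1 = qpoch m * (1 - q ^+ m.+1).
Proof. exact: big_ord_recr. Qed.

Definition qpoch_tail (a b : nat) : R := \prod_(i < b) (1 - q ^+ (a + i).+1).

Lemma qpochD a b : qpoch (a + b) = qpoch a * qpoch_tail a b.
Proof. exact: big_split_ord. Qed.

Lemma qpoch_qbinom N k : (k <= N)%N -> qpoch k * qpoch (N - k) * qbinom N k = qpoch N.
Proof.
elim: N k => [|N IHN] [|k] //=; rewrite ?qpoch0 ?qbinom0 ?subn0 ?mul1r ?mulr1 //.
rewrite ltnS subSS leq_eqVlt => /predU1P[-> | ltkN].
  by rewrite qbinom_small // subnn qpoch0 qbinomii expr0 !mulr1 add0r mulr1.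
rewrite [qpoch N.+1]qpochS.
have -> : q ^+ N.+1 = q ^+ (N - k) * q ^+ k.+1 by rewrite -exprD addnS subnK // ltnW.
have qpoch_Nk : qpoch (N - k) = qpoch (N - k.+1) * (1 - q ^+ (N - k)).
  by rewrite -(subnSK ltkN) qpochS.
have -> : qpoch N * (1 - q ^+ (N - k) * q ^+ k.+1)
    = (1 - q ^+ (N - k)) * qpoch N + (1 - q ^+ k.+1) * q ^+ (N - k) * qpoch N by ring.
rewrite -{1}(IHN _ ltkN) -(IHN _ (ltnW ltkN)) qpoch_Nk qpochS; ring.
Qed.

Definition qprod_coef N k := (-1) ^+ k * q ^+ 'C(k, 2) * qbinom N k.

Lemma qprod_coef0 N : qprod_coef N 0 = 1.
Proof. by rewrite /qprod_coef qbinom0 !mulr1. Qed.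

Lemma qprod_coefS N k :
  qprod_coef N.+1 k.+1 = qprod_coef N k.+1 - q ^+ N * qprod_coef N k.
Proof.
rewrite /qprod_coef /=; case: (leqP k N) => [leKN | ltNk]; last first.
  by rewrite (qbinom_small ltNk) (qbinom_small (leqW ltNk)) !mulr0 addr0 subr0 mulr0.
rewrite binS bin1 exprD exprS -(subnKC leKN) exprD subnKC //; ring.
Qed.

Lemma qbinom_theorem N :
  \prod_(i < N) ('X - (q ^+ i)%:P) = \sum_(k < N.+1) qprod_coef N k *: 'X^(N - k).
Proof.
elim: N => [|N IHN]; first by rewrite big_ord0 big_ord1 qprod_coef0 scale1r.
rewrite big_ord_recr /= IHN [in RHS]big_ord_recl qprod_coef0 scale1r subn0.
under [in RHS]eq_bigr => k _ do rewrite /bump /= qprod_coefS scalerBl subSS.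
rewrite sumrB addrA mulrBr !mulr_suml; congr (_ - _); last first.
  by apply: eq_bigr => k _; rewrite mulrC mul_polyC scalerA.
rewrite big_ord_recl big_ord_recr /= qprod_coef0 scale1r subn0 -exprSr.
rewrite /qprod_coef (qbinom_small (ltnSn N)) !mulr0 scale0r addr0; congr (_ + _).
by apply: eq_bigr => k _; rewrite -scalerAl -exprSr subnSK.
Qed.

Lemma qbinom_theorem_horner N a :
  (\prod_(i < N) ('X - (q ^+ i)%:P)).[a] = \sum_(k < N.+1) qprod_coef N k * a ^+ (N - k).
Proof.
rewrite qbinom_theorem horner_sum; apply: eq_bigr => k _.
by rewrite hornerZ hornerXn.
Qed.

Lemma qbinom_theorem_euler N a :
  ('X * (\prod_(i < N) ('X - (q ^+ i)%:P))^`()).[a]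
  = \sum_(k < N.+1) qprod_coef N k * (N - k)%:R * a ^+ (N - k).
Proof.
rewrite qbinom_theorem raddf_sum mulr_sumr horner_sum; apply: eq_bigr => k _.
by rewrite /= derivZ -scalerAr mulX_derivXn hornerZ hornerMn hornerXn -mulr_natl mulrA.
Qed.

Lemma qbinom_middle_root n :
  \sum_(k < (n.+1 + n).+1)
     qprod_coef (n.+1 + n) k * ((n.+1 + n)%:R - 2 * k%:R) * (q ^+ n) ^+ (n.+1 + n - k)
  = 2 * q ^+ n * \prod_(i < n) (q ^+ n - q ^+ i)
      * \prod_(i < n) (q ^+ n - q ^+ (n.+1 + i)).
Proof.
pose p := \prod_(i < n.+1 + n) ('X - (q ^+ i)%:P).
pose t := \prod_(i < n) ('X - (q ^+ i)%:P) * \prod_(i < n) ('X - (q ^+ (n.+1 + i))%:P).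
have p_split : p = ('X - (q ^+ n)%:P) * t.
  by rewrite /p /t big_split_ord /= big_ord_recr /= -mulrA mulrCA.
transitivity (2 * ('X * p^`()).[q ^+ n] - (n.+1 + n)%:R * p.[q ^+ n]).
  rewrite qbinom_theorem_euler qbinom_theorem_horner !mulr_sumr -sumrB.
  by apply: eq_bigr => k _; rewrite natrB; [ring | rewrite -ltnS].
rewrite p_split derivM derivXsubC mul1r.
rewrite !(hornerXsubC, hornerM, hornerD, hornerX) subrr !mul0r addr0 mulr0 subr0.
by rewrite !horner_prod !(eq_bigr _ (fun i _ => hornerXsubC _ _)) !mulrA.
Qed.
End GaussianBinomial.
Arguments qbinom {R} q N k : simpl never.
Arguments qpoch {R}.
Arguments qpoch_tail {R}.
Arguments qprod_coef {R}.

Lemma dvdp_mul_subr1 (R : idomainType) (d p1 p2 : {poly R}) :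
  d %| p1 - 1 -> d %| p2 - 1 -> d %| p1 * p2 - 1.
Proof.
move=> d_p1 d_p2; have -> : p1 * p2 - 1 = (p1 - 1) * p2 + (p2 - 1) by ring.
by rewrite dvdp_add // dvdp_mulr.
Qed.

Lemma bin2_twice m : ('C(m, 2) * 2 + m = m * m)%N.
Proof. by elim: m => [|m IHm] //; rewrite binS bin1; nia. Qed.

Section JacobiIdentity.
Variable R : idomainType.
Local Notation X := ('X : {poly R}).

Definition jacobi_term (j : nat) : {poly R} := (-1) ^+ j * (2 * j + 1)%:R * X ^+ 'C(j.+1, 2).

Lemma qpoch_neq0 m : qpoch X m != 0.
Proof.
apply/prodf_neq0 => i _; apply/eqP => /(congr1 (coefp 0)) /eqP.
by rewrite /= coefB coef1 coefXn /= subr0 coef0 oner_eq0.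
Qed.

Lemma qbinom_sym N k : (k <= N)%N -> qbinom X N (N - k) = qbinom X N k.
Proof.
move=> leKN; apply: (mulfI (mulf_neq0 (qpoch_neq0 k) (qpoch_neq0 (N - k)))).
rewrite qpoch_qbinom // -(@qpoch_qbinom _ X N (N - k)) ?leq_subr // subKn //.
by rewrite [Y in Y * _]mulrC.
Qed.

Let E n := (n + 'C(n, 2) + n * n)%N.

Lemma qprod_coef_low n j : (j <= n)%N ->
  qprod_coef X (n.+1 + n) (n - j) * ((n.+1 + n)%:R - 2 * (n - j)%:R)
    * (X ^+ n) ^+ (n.+1 + n - (n - j))
  = (-1) ^+ n * X ^+ (E n) * (jacobi_term j * qbinom X (n.+1 + n) (n - j)).
Proof.
move=> /subnK <-; set r := (n - j)%N; rewrite addnK /qprod_coef /jacobi_term.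
have -> : ((r + j).+1 + (r + j) - r = (2 * j).+1 + r)%N by lia.
have -> : ((r + j).+1 + (r + j))%:R - 2 * r%:R = (2 * j + 1)%:R :> {poly R}.
  by rewrite -natrM -natrB; [congr _%:R; lia | lia].
have -> : (-1) ^+ r = (-1) ^+ (r + j) * (-1) ^+ j :> {poly R}.
  by rewrite -exprD -addnA addnn -mul2n exprD exprM sqrrN !expr1n mulr1.
have eX : ('C(r, 2) + (r + j) * ((2 * j).+1 + r) = E (r + j) + 'C(j.+1, 2))%N.
  rewrite /E; have := bin2_twice r; have := bin2_twice (r + j); have := bin2_twice j.+1.
  nia.
transitivity ((-1) ^+ (r + j) * (-1) ^+ j * (2 * j + 1)%:R
    * qbinom X ((r + j).+1 + (r + j)) r * X ^+ ('C(r, 2) + (r + j) * ((2 * j).+1 + r))).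
  by rewrite -exprM (exprD X); ring.
by rewrite eX (exprD X); ring.
Qed.

Lemma qprod_coef_high n j : (j <= n)%N ->
  qprod_coef X (n.+1 + n) (n.+1 + j) * ((n.+1 + n)%:R - 2 * (n.+1 + j)%:R)
    * (X ^+ n) ^+ (n.+1 + n - (n.+1 + j))
  = (-1) ^+ n * X ^+ (E n) * (jacobi_term j * qbinom X (n.+1 + n) (n - j)).
Proof.
move=> /subnK <-; set r := (n - j)%N; rewrite addnK /qprod_coef /jacobi_term.
rewrite -qbinom_sym; last by lia.
have -> : ((r + j).+1 + (r + j) - ((r + j).+1 + j) = r)%N by lia.
have -> : ((r + j).+1 + (r + j))%:R - 2 * ((r + j).+1 + j)%:R = - (2 * j + 1)%:R :> {poly R}.
  rewrite -natrM (_ : 2 * _ = (r + j).+1 + (r + j) + (2 * j + 1))%N ?natrD; [ring | lia].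
have -> : (-1) ^+ ((r + j).+1 + j) = - ((-1) ^+ (r + j) * (-1) ^+ j) :> {poly R}.
  by rewrite addSn exprS exprD mulN1r.
have eX : ('C((r + j).+1 + j, 2) + (r + j) * r = E (r + j) + 'C(j.+1, 2))%N.
  rewrite /E; have := bin2_twice ((r + j).+1 + j); have := bin2_twice (r + j).
  have := bin2_twice j.+1; nia.
transitivity ((-1) ^+ (r + j) * (-1) ^+ j * (2 * j + 1)%:R
    * qbinom X ((r + j).+1 + (r + j)) r
    * X ^+ ('C((r + j).+1 + j, 2) + (r + j) * r)).
  by rewrite -exprM (exprD X); ring.
by rewrite eX (exprD X); ring.
Qed.

Lemma prod_Xn_subXi n : \prod_(i < n) (X ^+ n - X ^+ i) = (-1) ^+ n * X ^+ 'C(n, 2) * qpoch X n.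
Proof.
transitivity (\prod_(i < n) - X ^+ i * \prod_(i < n) (1 - X ^+ (n - i))).
  rewrite -big_split; apply: eq_bigr => i _ /=.
  by rewrite mulrBr mulr1 mulNr -exprD subnKC 1?ltnW // opprK addrC.
rewrite prodrN card_ord prodrXr -bin2_sum big_mkord; congr (_ * _).
rewrite /qpoch (reindex_inj rev_ord_inj); apply: eq_bigr => i _ /=.
by rewrite subKn.
Qed.

Lemma prod_Xn_subXnSi n :
  \prod_(i < n) (X ^+ n - X ^+ (n.+1 + i)) = X ^+ (n * n) * qpoch X n.
Proof.
transitivity (\prod_(i < n) (X ^+ n * (1 - X ^+ i.+1))).
  by apply: eq_bigr => i _; rewrite mulrBr mulr1 -exprD addSnnS.
by rewrite big_split prodr_const card_ord exprM.
Qed.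

Lemma jacobi_poly (two_neq0 : 2%:R != 0 :> R) n :
  \sum_(j < n.+1) jacobi_term j * qbinom X (n.+1 + n) (n - j) = qpoch X n ^+ 2.
Proof.
have := qbinom_middle_root _ X n.
rewrite prod_Xn_subXi prod_Xn_subXnSi -addnS big_split_ord (reindex_inj rev_ord_inj) /=.
under eq_bigr => j _ do rewrite subSS qprod_coef_low -1?ltnS //.
under [X in _ + X = _]eq_bigr => j _ do rewrite qprod_coef_high -1?ltnS //.
rewrite -big_split /=.
under eq_bigr do rewrite -mulr2n -mulr_natl mulrA.
rewrite -mulr_sumr => mid.
have nz : 2%:R * ((-1) ^+ n * X ^+ E n) != 0.
  apply/mulf_neq0; first by rewrite -(polyC_natr _ 2) polyC_eq0.
  by rewrite mulf_neq0 ?signr_eq0 // expf_neq0 // polyX_eq0.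
by apply: (mulfI nz); rewrite mid /E !exprD; ring.
Qed.

Lemma qpoch_tail_mod a b : X ^+ a.+1 %| qpoch_tail X a b - 1.
Proof.
elim: b => [|b IHb]; first by rewrite /qpoch_tail big_ord0 subrr dvdp0.
rewrite /qpoch_tail big_ord_recr /= -/(qpoch_tail X a b) dvdp_mul_subr1 //.
by rewrite addrAC subrr add0r dvdpNr dvdp_exp2l // ltnS leq_addr.
Qed.

Lemma qpoch_qbinom_mod [n N k] : (k <= n)%N -> (k <= N - k)%N ->
  X ^+ k.+1 %| qpoch X n * qbinom X N k - 1.
Proof.
move=> le_kn le_k_Nk; have le_kN : (k <= N)%N by lia.
have qbinom_tail : qpoch X k * qbinom X N k = qpoch_tail X (N - k) k.
  apply: (mulfI (qpoch_neq0 (N - k))).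
  by rewrite mulrCA mulrA qpoch_qbinom // -qpochD subnK.
rewrite -(subnKC le_kn) qpochD mulrAC qbinom_tail mulrC.
rewrite dvdp_mul_subr1 ?qpoch_tail_mod //.
exact: dvdp_trans (dvdp_exp2l _ _) (qpoch_tail_mod _ _).
Qed.

Lemma qpoch_cube_mod (two_neq0 : 2%:R != 0 :> R) n :
  X ^+ n.+1 %| qpoch X n ^+ 3 - \sum_(j < n.+1) jacobi_term j.
Proof.
rewrite [qpoch X n ^+ 3]exprS -(jacobi_poly two_neq0) mulr_sumr -sumrB.
elim/big_ind: _ => [|p1 p2|j _]; [exact: dvdp0 | exact: dvdp_add |].
have -> : qpoch X n * (jacobi_term j * qbinom X (n.+1 + n) (n - j)) - jacobi_term j
    = (-1) ^+ j * (2 * j + 1)%:R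
      * (X ^+ 'C(j.+1, 2) * (qpoch X n * qbinom X (n.+1 + n) (n - j) - 1)).
  by rewrite /jacobi_term; ring.
apply/dvdp_mull/(dvdp_trans _ (dvdp_mul (dvdpp _) (qpoch_qbinom_mod (leq_subr j n) _))).
  by rewrite -exprD dvdp_exp2l //; have := bin2_twice j.+1; have := ltn_ord j; nia.
lia.
Qed.
End JacobiIdentity.

Lemma sigma_sum [n s] : (0 < s <= n)%N -> sigma s = (\sum_(e < n | e.+1 %| s) e.+1)%N.
Proof.
case/andP=> s_gt0 le_sn; rewrite /sigma (perm_big [seq d <- iota 1 n | d %| s]%N).
  rewrite big_filter (_ : iota 1 n = index_iota 1 n.+1) ?big_add1 ?big_mkord //.
  by rewrite /index_iota subn1.
apply: uniq_perm; [exact: divisors_uniq | by rewrite filter_uniq ?iota_uniq |].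
move=> d; rewrite mem_filter mem_iota -dvdn_divisors //.
case d_s: (d %| s)%N => //=; have := dvdn_gt0 s_gt0 d_s; have := dvdn_leq s_gt0 d_s; lia.
Qed.

Section LogDerivative.
Variable R : idomainType.
Local Notation X := ('X : {poly R}).

Definition geom_trunc (n e : nat) : {poly R} := \sum_(t < n) X ^+ (e * t.+1).

(* A truncation of A_0 = sum_e e q^e / (1 - q^e). *)
Definition lambert_trunc (n m : nat) : {poly R} := \sum_(e < m) e.+1%:R *: geom_trunc n e.+1.

Lemma geom_truncE n e : (1 - X ^+ e) * geom_trunc n e = X ^+ e - X ^+ (e * n.+1).
Proof.
elim: n => [|n IHn]; first by rewrite /geom_trunc big_ord0 muln1 mulr0 subrr.
rewrite /geom_trunc big_ord_recr /= mulrDr -/(geom_trunc n e) IHn.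
by rewrite [in X ^+ (e * n.+2)]mulnS exprD; ring.
Qed.

Lemma factor_logder_mod n e : (0 < e)%N ->
  X ^+ n.+1 %| X * (1 - X ^+ e)^`() + (1 - X ^+ e) * (e%:R *: geom_trunc n e).
Proof.
move=> e_gt0; rewrite -scalerAr geom_truncE derivB mulrBr mulX_derivXn -polyC1 derivC.
rewrite mulr0 sub0r scalerBr !scaler_nat addKr dvdpNr -mulr_natl dvdp_mull //.
by rewrite dvdp_exp2l // leq_pmull.
Qed.

Lemma qpoch_logder_mod n m :
  X ^+ n.+1 %| X * (qpoch X m)^`() + qpoch X m * lambert_trunc n m.
Proof.
elim: m => [|m IHm].
  by rewrite qpoch0 /lambert_trunc big_ord0 -polyC1 derivC !mulr0 addr0 dvdp0.
rewrite qpochS /lambert_trunc big_ord_recr /= -/(lambert_trunc n m) derivM.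
set f := 1 - _; set l := _ *: _.
have -> : X * ((qpoch X m)^`() * f + qpoch X m * f^`())
      + qpoch X m * f * (lambert_trunc n m + l)
    = f * (X * (qpoch X m)^`() + qpoch X m * lambert_trunc n m)
      + qpoch X m * (X * f^`() + f * l) by ring.
by rewrite dvdp_add ?dvdp_mull ?factor_logder_mod.
Qed.

Lemma qpoch_cube_logder_mod n :
  X ^+ n.+1 %| X * (qpoch X n ^+ 3)^`() + qpoch X n ^+ 3 * (3 * lambert_trunc n n).
Proof.
have -> : X * (qpoch X n ^+ 3)^`() + qpoch X n ^+ 3 * (3 * lambert_trunc n n)
    = 3 * qpoch X n ^+ 2 * (X * (qpoch X n)^`() + qpoch X n * lambert_trunc n n).
  by rewrite deriv_exp -mulr_natr; ring.
exact/dvdp_mull/qpoch_logder_mod.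
Qed.

Lemma coef_geom_trunc n e s : (0 < e)%N -> (0 < s <= n)%N ->
  (geom_trunc n e)`_s = (e %| s)%:R.
Proof.
move=> e_gt0 /andP[s_gt0 le_sn]; rewrite /geom_trunc coef_sum.
under eq_bigr do rewrite coefXn.
have [/dvdnP[c s_eq] | ndvd] := boolP (e %| s)%N; last first.
  by rewrite big1 // => t _; case: eqP => // s_eq; rewrite s_eq dvdn_mulr in ndvd.
have lt_c1n : (c.-1 < n)%N by nia.
rewrite (bigD1 (Ordinal lt_c1n)) //= big1 ?addr0.
  by rewrite s_eq mulnC prednK ?eqxx //; nia.
by move=> t /eqP t_neq; case: eqP => // s_et; case: t_neq; apply: val_inj => /=; nia.
Qed.

Lemma coef_lambert_trunc0 n m : (lambert_trunc n m)`_0 = 0.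
Proof.
rewrite /lambert_trunc coef_sum big1 // => e _; rewrite coefZ /geom_trunc coef_sum.
by rewrite big1 ?mulr0 // => t _; rewrite coefXn eq_sym muln_eq0.
Qed.

Lemma coef_lambert_trunc n s : (0 < s <= n)%N -> (lambert_trunc n n)`_s = (sigma s)%:R.
Proof.
move=> s_range; rewrite (sigma_sum s_range) natr_sum big_mkcond /lambert_trunc coef_sum.
apply: eq_bigr => e _; rewrite coefZ coef_geom_trunc //.
by case: (e.+1 %| s)%N; rewrite ?mulr1 ?mulr0.
Qed.
End LogDerivative.

Definition trunc (n : nat) (f : series) : {poly rat} := \poly_(i < n.+1) f i.

Lemma coef_trunc n f i : (i <= n)%N -> (trunc n f)`_i = f i.
Proof. by move=> le_in; rewrite coef_poly ltnS le_in. Qed.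

Lemma smul_coef_poly [f g : series] [p r : {poly rat}] [n] :
  (forall i, (i <= n)%N -> f i = p`_i) -> (forall i, (i <= n)%N -> g i = r`_i) ->
  smul f g n = (p * r)`_n.
Proof.
move=> fp gr; rewrite /smul coefM; apply: eq_bigr => k _.
by rewrite fp -1?ltnS // gr // leq_subr.
Qed.

(* Coefficients up to n only depend on truncations, so associativity is inherited
   from {poly rat}. *)
Lemma smulA f g h : smul (smul f g) h = smul f (smul g h).
Proof.
apply: functional_extensionality => n.
have coef_truncn u i : (i <= n)%N -> u i = (trunc n u)`_i by move=> le_in; rewrite coef_trunc.
have smul_trunc u v i : (i <= n)%N -> smul u v i = (trunc n u * trunc n v)`_i.
  by move=> le_in; apply: smul_coef_poly => j le_ji; apply/coef_truncn/(leq_trans le_ji).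
rewrite (smul_coef_poly (smul_trunc _ _) (coef_truncn h)).
by rewrite (smul_coef_poly (coef_truncn f) (smul_trunc _ _)) mulrA.
Qed.

Lemma smulDr f g h : smul f (sadd g h) = sadd (smul f g) (smul f h).
Proof.
apply: functional_extensionality => n; rewrite /smul /sadd -big_split /=.
by apply: eq_bigr => k _; rewrite mulrDr.
Qed.

Lemma smulZr c f g : smul f (sscale c g) = sscale c (smul f g).
Proof.
apply: functional_extensionality => n; rewrite /smul /sscale mulr_sumr.
by apply: eq_bigr => k _; rewrite mulrCA.
Qed.

Lemma smulZl c f g : smul (sscale c f) g = sscale c (smul f g).
Proof.
apply: functional_extensionality => n; rewrite /smul /sscale mulr_sumr.
by apply: eq_bigr => k _; rewrite mulrA.
Qed.

Lemma sscale_smulC c f : sscale c f = smul (sconst c) f.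
Proof.
apply: functional_extensionality => n; rewrite /smul /sscale big_ord_recl /= subn0.
by rewrite big1 ?addr0 // => k _; rewrite /sconst /= mul0r.
Qed.

Lemma ThetaD f g : Theta (sadd f g) = sadd (Theta f) (Theta g).
Proof. by apply: functional_extensionality => n; rewrite /Theta /sadd mulrDr. Qed.

Lemma ThetaZ c f : Theta (sscale c f) = sscale c (Theta f).
Proof. by apply: functional_extensionality => n; rewrite /Theta /sscale mulrCA. Qed.

Lemma ThetaM f g : Theta (smul f g) = sadd (smul (Theta f) g) (smul f (Theta g)).
Proof.
apply: functional_extensionality => n; rewrite /Theta /smul /sadd mulr_sumr -big_split /=.
apply: eq_bigr => k _; rewrite -{1}(subnKC (_ : k <= n)%N) -1?ltnS // natrD; ring.
Qed.

Lemma ThetaC c : Theta (sconst c) = sconst 0.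
Proof. by apply: functional_extensionality => -[|n]; rewrite /Theta /sconst ?mul0r ?mulr0. Qed.

Lemma Theta_A i : Theta (A i) = A i.+1.
Proof.
apply: functional_extensionality => -[|n]; rewrite /Theta /A ?mulr0 //=.
by rewrite -natrM expnS mulnA.
Qed.

Lemma polyInA_le m m' f : (m <= m')%N -> polyInA m f -> polyInA m' f.
Proof.
move=> le_mm'; elim=> [c|i lt_im|f1 g1 _ f1P _ g1P|f1 g1 _ f1P _ g1P].
- exact: polyInA_const.
- exact/polyInA_gen/(leq_trans lt_im).
- exact: polyInA_add.
- exact: polyInA_mul.
Qed.

Lemma polyInA_Theta m f : polyInA m f -> polyInA m.+1 (Theta f).
Proof.
elim=> [c|i lt_im|f1 g1 _ f1P _ g1P|f1 g1 f1A f1P g1A g1P].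
- by rewrite ThetaC; apply: polyInA_const.
- by rewrite Theta_A; apply: polyInA_gen.
- by rewrite ThetaD; apply: polyInA_add.
rewrite ThetaM; apply: polyInA_add; apply: polyInA_mul => //; exact: polyInA_le (leqnSn m) _.
Qed.

Lemma dvdp_Xn_coef [R : idomainType] [n] [p r : {poly R}] [i] :
  'X^(n.+1) %| p - r -> (i <= n)%N -> p`_i = r`_i.
Proof.
move=> /(Pdiv.IdomainMonic.dvdpP (monicXn _ _))[d pr_eq] le_in.
by apply/eqP; rewrite -subr_eq0 -coefB pr_eq coefMXn ltnS le_in.
Qed.

Lemma coefX_deriv (R : nzSemiRingType) (p : {poly R}) i : ('X * p^`())`_i = i%:R * p`_i.
Proof. by rewrite coefXM coef_deriv; case: i => [|i] /=; rewrite ?mul0r // mulr_natl. Qed.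

Lemma coef_jacobi_term (R : idomainType) j i :
  (jacobi_term R j)`_i = (-1) ^+ j * (2 * j + 1)%:R * (i == 'C(j.+1, 2))%:R.
Proof.
have -> : jacobi_term R j = ((-1) ^+ j * (2 * j + 1)%:R)%:P * 'X^'C(j.+1, 2).
  by rewrite /jacobi_term polyCM polyC_exp polyCN polyC1 polyC_natr.
by rewrite coefCM coefXn.
Qed.

Lemma P0E [n i] : (i <= n)%N ->
  P0 i = \sum_(j < n.+1) (-1) ^+ j * (2 * j + 1)%:R * (i == 'C(j.+1, 2))%:R.
Proof.
move=> le_in; rewrite /P0 big_add1 big_mkord big_mkcond /=.
rewrite (big_ord_widen n.+1 (fun j : nat => if ((j.+1 * j) %/ 2 == i)%N
  then (-1) ^+ j * (2 * j.+1 - 1)%:R else 0 : rat)) // big_mkcond /=.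
apply: eq_bigr => j _; rewrite divn2 -bin2 [i == _]eq_sym.
case: ltnP => [_ | lt_ij].
  by case: eqP => _; rewrite ?mulr1 ?mulr0 // (_ : 2 * j.+1 - 1 = 2 * j + 1)%N //; lia.
suff /negPf -> : 'C(j.+1, 2) != i by rewrite mulr0.
by rewrite neq_ltn; apply/orP; right; have := bin2_twice j.+1; nia.
Qed.

Local Notation X := ('X : {poly rat}).

Lemma P0_coef_qpoch [n i] : (i <= n)%N -> P0 i = (qpoch X n ^+ 3)`_i.
Proof.
move=> le_in; have two_neq0 : 2%:R != 0 :> rat by rewrite pnatr_eq0.
rewrite (P0E le_in) (dvdp_Xn_coef (qpoch_cube_mod _ two_neq0 n) le_in) coef_sum.
by apply: eq_bigr => j _; rewrite coef_jacobi_term.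
Qed.

Lemma A0_coef_lambert [n i] : (i <= n)%N -> A 0 i = (lambert_trunc rat n n)`_i.
Proof.
case: i => [|i] le_in; first by rewrite coef_lambert_trunc0.
by rewrite coef_lambert_trunc // /A expn0 mul1n.
Qed.

Lemma Theta_P0 : Theta P0 = sscale (-3) (smul P0 (A 0)).
Proof.
apply: functional_extensionality => n; rewrite /Theta /sscale (P0_coef_qpoch (leqnn n)).
rewrite -coefX_deriv (smul_coef_poly (@P0_coef_qpoch n) (@A0_coef_lambert n)).
have := qpoch_cube_logder_mod rat n; rewrite -[_ * (3 * _)]opprK.
move=> /dvdp_Xn_coef -> //; rewrite coefN mulrCA mulr_natl coefMn.
by rewrite mulNr mulr_natl.
Qed.

Definition Pnext (f : series) : series := sadd (Theta f) (sscale (-3) (smul (A 0) f)).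

(* Pm 0 = A 0 is a junk value. *)
Definition Pm (m : nat) : series := iter m.-1 Pnext (A 0).

Lemma PmS m : (1 <= m)%N -> Pm m.+1 = Pnext (Pm m).
Proof. by case: m. Qed.

Lemma iter_Theta_P0 m : (1 <= m)%N -> iter m Theta P0 = sscale (-3) (smul P0 (Pm m)).
Proof.
elim: m => [//|[_ _ | m IHm _]]; first exact: Theta_P0.
rewrite iterS IHm // [Pm m.+2]PmS // /Pnext ThetaZ ThetaM Theta_P0.
rewrite smulZl smulA smulDr smulZr.
by apply: functional_extensionality => n; rewrite /sscale /sadd; ring.
Qed.

Lemma polyInA_Pm m : (1 <= m)%N -> polyInA m (Pm m).
Proof.
elim: m => [//|[_ _ | m IHm _]]; first exact: polyInA_gen.
rewrite PmS // /Pnext; apply: polyInA_add; first exact/polyInA_Theta/IHm.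
rewrite sscale_smulC; apply: polyInA_mul; first exact: polyInA_const.
apply: polyInA_mul; first exact: polyInA_gen.
exact: polyInA_le (leqnSn _) (IHm _).
Qed.

Theorem lemma3p1 :
  exists P : nat -> series,
    (forall m : nat, (1 <= m)%N ->
       iter m Theta P0 = sscale (-3) (smul P0 (P m)) /\ polyInA m (P m)) /\
    P 1%N = A 0 /\
    (forall m : nat, (1 <= m)%N ->
       P m.+1 = sadd (Theta (P m)) (sscale (-3) (smul (A 0) (P m)))).
Proof.
exists Pm; split; first by move=> m m_gt0; split; [exact: iter_Theta_P0 | exact: polyInA_Pm].
by split=> // m; apply: PmS.
Qed.
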